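(* Let $\alpha,\beta,p^r,q_{max},M,B,\overline{v}>0$ with $4\alpha p^r>\beta^2$ and $\delta\in[0,1]$. Let $D_0:[0,\infty)\to\mathbb{R}$ be differentiable, concave and strictly increasing. Let $X$ be a cumulative distribution function with density $x>0$ on $(0,\overline{v})$ and support in $[0,\overline{v}]$, let $y$ be the inverse of the strictly decreasing bijection $p\mapsto MB(1-X(p))/p$ from $(0,\overline{v})$ onto $(0,\infty)$, and assume $D\mapsto D\,y(D)$ is concave and differentiable on $D>0$. For a side-payment price $p^t\ge0$, consider the problem in which the ISP chooses $(p^s,q)$ with $p^s\ge0$, $0<q\le q_{max}$, and the CP chooses investment $c$, with demand $D=D_0(c)-\alpha p^s+\beta q$ and utilities $U_{isp}=(p^s-p^r)D+(1-\delta)p^tD-p^rq^2$, $U_{cp}=y(D)D-p^tD-c$; a best strategy is a triple $(p^{s*},q^*,c^* )$ with $(p^{s*},q^* )$ maximizing $U_{isp}$ given $c^*$ and $c^*$ maximizing $U_{cp}$ given $(p^{s*},q^* )$. Let $0\le p^t_x<p^t_y$ and let $(p^{s*}_x,q^*_x,c^*_x)$ and $(p^{s*}_y,q^*_y,c^*_y)$ be best strategies for $p^t_x$ and $p^t_y$ respectively, each satisfying $p^{s*}>0$, $q^*>0$ (with $q^*<q_{max}$) and $c^*>0$. Then $c^*_x>c^*_y$; that is, the optimal investment of the CP is decreasing in the side-payment price.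
   Context: Advertisement model: the CP earns advertising revenue $y(D)D$ from user demand $D$ (where $y(D)$ is the optimal price per attention, determined by $MB(1-X(y(D)))/y(D)=D$ for $M$ advertisers with budget $B$ and valuation cdf $X$), invests $c$ in content raising potential demand to $D_0(c)$, and pays the ISP $p^t$ per unit of demand, taxed at rate $\delta$. The ISP sets user price $p^s$ and QoS $q$, paying $p^r$ per unit of bandwidth. *)

From Stdlib Require Import Reals.
From Coquelicot Require Import Coquelicot.
Open Scope R_scope.

Definition concave_on (S : R -> Prop) (f : R -> R) : Prop :=
  forall a b t, S a -> S b -> 0 <= t <= 1 ->
    t * f a + (1 - t) * f b <= f (t * a + (1 - t) * b).

Definition differentiable_on_nonneg (f : R -> R) : Prop :=
  (forall c, 0 < c -> ex_derive f c) /\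
  (exists l : R, filterlim (fun h => (f h - f 0) / h) (at_right 0) (locally l)).

Definition strictly_increasing_on_nonneg (f : R -> R) : Prop :=
  forall a b, 0 <= a -> a < b -> f a < f b.

Definition cdf_with_density (vbar : R) (X x : R -> R) : Prop :=
  (forall t, continuous X t) /\
  (forall t, t <= 0 -> X t = 0) /\
  (forall t, vbar <= t -> X t = 1) /\
  (forall t, 0 < t < vbar -> is_derive X t (x t) /\ 0 < x t).

(* y is the inverse of p |-> M B (1 - X p) / p : (0,vbar) -> (0,+oo). *)
Definition is_attention_price (M B vbar : R) (X y : R -> R) : Prop :=
  forall D, 0 < D -> 0 < y D < vbar /\ M * B * (1 - X (y D)) / y D = D.

Definition demand (D0 : R -> R) (alpha beta ps q c : R) : R :=
  D0 c - alpha * ps + beta * q.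

Definition U_isp (pr delta pt ps q D : R) : R :=
  (ps - pr) * D + (1 - delta) * pt * D - pr * q ^ 2.

Definition U_cp (y : R -> R) (pt D c : R) : R :=
  y D * D - pt * D - c.

(* Feasible strategy profiles: p^s >= 0, 0 < q <= qmax, investment c >= 0,
   and positive demand (the advertising revenue y(D) D is only defined for
   D > 0). *)
Definition feasible (D0 : R -> R) (alpha beta qmax ps q c : R) : Prop :=
  0 <= ps /\ 0 < q <= qmax /\ 0 <= c /\ 0 < demand D0 alpha beta ps q c.

Definition best_strategy (D0 y : R -> R) (alpha beta pr qmax delta pt : R)
    (ps q c : R) : Prop :=
  feasible D0 alpha beta qmax ps q c /\
  (forall ps' q', feasible D0 alpha beta qmax ps' q' c ->
     U_isp pr delta pt ps' q' (demand D0 alpha beta ps' q' c)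
       <= U_isp pr delta pt ps q (demand D0 alpha beta ps q c)) /\
  (forall c', feasible D0 alpha beta qmax ps q c' ->
     U_cp y pt (demand D0 alpha beta ps q c') c'
       <= U_cp y pt (demand D0 alpha beta ps q c) c).

(* At an interior equilibrium the ISP's first-order conditions in p^s and q
   are linear; writing m := p^s - p^r + (1 - delta) p^t for its unit margin they
   give D = alpha m and m (4 alpha p^r - beta^2) = 2 p^r (D0(c) - alpha p^r +
   alpha (1 - delta) p^t), so demand is nondecreasing in D0(c) and in p^t.  The
   CP's first-order condition reads (R'(D) - p^t) D0'(c) = 1 with R(D) = D y(D).
   If c_y >= c_x, concavity and monotonicity of D0 give D0'(c_y) <= D0'(c_x) and
   D0(c_y) >= D0(c_x), hence D_y >= D_x and, by concavity of R, R'(D_y) <=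
   R'(D_x); with p^t_y > p^t_x both factors of the CP's condition strictly drop,
   which contradicts (R'(D_y) - p^t_y) D0'(c_y) = 1 = (R'(D_x) - p^t_x) D0'(c_x). *)

From Stdlib Require Import Reals Lra Psatz.
From Coquelicot Require Import Coquelicot.
Open Scope R_scope.

Lemma is_derive_ge_of_right_slope (f : R -> R) (a l k r : R) :
  is_derive f a l -> 0 < r ->
  (forall h, 0 < h < r -> k * h <= f (a + h) - f a) -> k <= l.
Proof.
  intros Hd Hr Hslope. apply is_derive_Reals in Hd.
  destruct (Rle_or_lt k l) as [|Hlt]; [assumption|exfalso].
  destruct (Hd (k - l)) as [d Hdl]; [lra|].
  set (h := Rmin d r / 2).
  assert (Hpos : 0 < Rmin d r) by (apply Rmin_pos; [apply cond_pos|lra]).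
  assert (Hh : 0 < h < r) by (pose proof (Rmin_r d r); unfold h; lra).
  assert (Hhd : Rabs h < d).
  { rewrite Rabs_right by lra. pose proof (Rmin_l d r); unfold h; lra. }
  specialize (Hdl h ltac:(lra) Hhd). specialize (Hslope h Hh).
  apply Rabs_def2 in Hdl.
  assert (Hq : (f (a + h) - f a) / h * h = f (a + h) - f a) by (field; lra).
  nra.
Qed.

(* Reflect through [a]: [t |-> f (2 a - t)] has derivative [- l] at [a]. *)
Lemma is_derive_le_of_left_slope (f : R -> R) (a l k r : R) :
  is_derive f a l -> 0 < r ->
  (forall h, 0 < h < r -> f a - f (a - h) <= k * h) -> l <= k.
Proof.
  intros Hd Hr Hslope.
  assert (Hrefl : is_derive (fun t => f (2 * a - t)) a (- l)).
  { assert (Hlin : is_derive (fun t : R => 2 * a - t) a (-1))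
      by (auto_derive; [easy | ring]).
    replace (- l) with (scal (-1) l) by (cbv [scal]; simpl; cbv [mult]; simpl; ring).
    apply (is_derive_comp f (fun t => 2 * a - t)); [|exact Hlin].
    replace (2 * a - a) with a by ring. exact Hd. }
  enough (- k <= - l) by lra.
  apply (is_derive_ge_of_right_slope _ a _ _ r Hrefl Hr).
  intros h Hh. replace (2 * a - (a + h)) with (a - h) by ring.
  replace (2 * a - a) with a by ring. specialize (Hslope h Hh). lra.
Qed.

Lemma concave_on_chord (S : R -> Prop) f a b t :
  concave_on S f -> S a -> S b -> 0 <= t <= 1 ->
  t * (f b - f a) <= f (a + t * (b - a)) - f a.
Proof.
  intros Hconc Ha Hb Ht.
  pose proof (Hconc b a t Hb Ha Ht) as Hc.
  replace (t * b + (1 - t) * a) with (a + t * (b - a)) in Hc by ring.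
  lra.
Qed.

Lemma concave_on_is_derive_antitone (S : R -> Prop) f a b la lb :
  concave_on S f -> S a -> S b -> a <= b ->
  is_derive f a la -> is_derive f b lb -> lb <= la.
Proof.
  intros Hconc Ha Hb Hab Hda Hdb.
  destruct (Req_dec a b) as [<-|Hne].
  { right. apply is_derive_unique in Hda. apply is_derive_unique in Hdb. congruence. }
  set (k := (f b - f a) / (b - a)).
  assert (Hfrac : forall h, 0 < h < b - a -> 0 <= h / (b - a) <= 1).
  { intros h Hh. split; [apply Rdiv_le_0_compat; lra|].
    apply Rmult_le_reg_r with (b - a); [lra|]. field_simplify; lra. }
  apply Rle_trans with k.
  - apply (is_derive_le_of_left_slope f b lb k (b - a) Hdb ltac:(lra)).
    intros h Hh.
    assert (Ht : 0 <= 1 - h / (b - a) <= 1) by (specialize (Hfrac h Hh); lra).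
    pose proof (concave_on_chord S f a b _ Hconc Ha Hb Ht) as Hc.
    replace (a + (1 - h / (b - a)) * (b - a)) with (b - h) in Hc by (field; lra).
    replace (k * h) with (h / (b - a) * (f b - f a)) by (unfold k; field; lra).
    lra.
  - apply (is_derive_ge_of_right_slope f a la k (b - a) Hda ltac:(lra)).
    intros h Hh.
    pose proof (concave_on_chord S f a b _ Hconc Ha Hb (Hfrac h Hh)) as Hc.
    replace (a + h / (b - a) * (b - a)) with (a + h) in Hc by (field; lra).
    replace (k * h) with (h / (b - a) * (f b - f a)) by (unfold k; field; lra).
    exact Hc.
Qed.

Lemma strictly_increasing_on_nonneg_is_derive_ge0 f c l :
  strictly_increasing_on_nonneg f -> 0 <= c -> is_derive f c l -> 0 <= l.
Proof.
  intros Hinc Hc Hd. apply (is_derive_ge_of_right_slope f c l 0 1 Hd ltac:(lra)).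
  intros h Hh. pose proof (Hinc c (c + h) Hc ltac:(lra)). lra.
Qed.

Lemma is_derive_local_max (f : R -> R) (c l : R) :
  is_derive f c l -> locally c (fun t => f t <= f c) -> l = 0.
Proof.
  intros Hd [eps Hmax]. apply is_derive_Reals in Hd.
  pose proof (cond_pos eps) as Heps.
  rewrite <- (derive_pt_eq_0 f c l (exist _ l Hd) Hd).
  apply (deriv_maximum f (c - eps / 2) (c + eps / 2)); try lra.
  intros t Ht1 Ht2. apply Hmax.
  change (Rabs (t - c) < eps). apply Rabs_def1; lra.
Qed.

Lemma locally_gt0 (a : R) : 0 < a -> locally a (fun t => 0 < t).
Proof. exact (locally_open _ _ (open_gt 0) (fun _ h => h) a). Qed.

Lemma continuous_locally_pos (f : R -> R) (a : R) :
  continuous f a -> 0 < f a -> locally a (fun t => 0 < f t).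
Proof.
  intros Hc Hpos. exact (Hc _ (locally_gt0 _ Hpos)).
Qed.

Lemma ex_derive_continuous_R (f : R -> R) (a : R) : ex_derive f a -> continuous f a.
Proof. exact (ex_derive_continuous (K := R_AbsRing) (V := R_NormedModule) f a). Qed.

Definition isp_margin (pr delta pt ps : R) : R := ps - pr + (1 - delta) * pt.

Section ISPBestResponse.

Variables (D0 : R -> R) (alpha beta pr qmax delta pt ps q c : R).
Hypothesis Hopt : forall ps' q', feasible D0 alpha beta qmax ps' q' c ->
  U_isp pr delta pt ps' q' (demand D0 alpha beta ps' q' c)
    <= U_isp pr delta pt ps q (demand D0 alpha beta ps q c).
Hypotheses (Hps : 0 < ps) (Hq : 0 < q < qmax) (Hc : 0 <= c)
  (HD : 0 < demand D0 alpha beta ps q c).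

Let m := isp_margin pr delta pt ps.

Let feasible_intro ps' q' :
  0 < ps' -> 0 < q' -> 0 < qmax - q' -> 0 < demand D0 alpha beta ps' q' c ->
  feasible D0 alpha beta qmax ps' q' c.
Proof. unfold feasible; intros; repeat split; lra. Qed.

Lemma isp_foc_price : demand D0 alpha beta ps q c = alpha * m.
Proof.
  set (U := fun p => U_isp pr delta pt p q (demand D0 alpha beta p q c)).
  assert (Hd : is_derive U ps (demand D0 alpha beta ps q c - alpha * m)).
  { unfold U, U_isp, demand, m, isp_margin. auto_derive; [easy | ring]. }
  enough (demand D0 alpha beta ps q c - alpha * m = 0) by lra.
  apply (is_derive_local_max U ps _ Hd).
  assert (Hpos := locally_gt0 _ Hps).
  assert (Hdem : locally ps (fun p => 0 < demand D0 alpha beta p q c)).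
  { apply (continuous_locally_pos (fun p => demand D0 alpha beta p q c)); [|easy].
    apply ex_derive_continuous_R. unfold demand. auto_derive. easy. }
  apply (filter_imp _ _ (fun p Hp => Hopt p q Hp)).
  eapply filter_imp; [|exact (filter_and _ _ Hpos Hdem)].
  intros p [Hp HDp]. apply feasible_intro; lra.
Qed.

Lemma isp_foc_quality : beta * m = 2 * pr * q.
Proof.
  set (U := fun q' => U_isp pr delta pt ps q' (demand D0 alpha beta ps q' c)).
  assert (Hd : is_derive U q (beta * m - 2 * pr * q)).
  { unfold U, U_isp, demand, m, isp_margin. auto_derive; [easy | ring]. }
  enough (beta * m - 2 * pr * q = 0) by lra.
  apply (is_derive_local_max U q _ Hd).
  assert (Hpos := locally_gt0 _ (proj1 Hq)).
  assert (Hcap : locally q (fun q' => 0 < qmax - q')).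
  { apply (continuous_locally_pos (fun q' => qmax - q'));
      [apply ex_derive_continuous_R; auto_derive; easy | lra]. }
  assert (Hdem : locally q (fun q' => 0 < demand D0 alpha beta ps q' c)).
  { apply (continuous_locally_pos (fun q' => demand D0 alpha beta ps q' c)); [|easy].
    apply ex_derive_continuous_R. unfold demand. auto_derive. easy. }
  apply (filter_imp _ _ (fun q' Hq' => Hopt ps q' Hq')).
  eapply filter_imp; [|exact (filter_and _ _ Hpos (filter_and _ _ Hcap Hdem))].
  intros q' (Hq' & Hcap' & HDq'). apply feasible_intro; lra.
Qed.

Lemma isp_interior_margin :
  m * (4 * alpha * pr - beta ^ 2) =
    2 * pr * (D0 c - alpha * pr + alpha * (1 - delta) * pt).
Proof.
  assert (E : m * (4 * alpha * pr - beta ^ 2)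
              - 2 * pr * (D0 c - alpha * pr + alpha * (1 - delta) * pt)
            = - 2 * pr * (demand D0 alpha beta ps q c - alpha * m)
              - beta * (beta * m - 2 * pr * q))
    by (unfold demand, m, isp_margin; ring).
  rewrite isp_foc_price, isp_foc_quality in E. lra.
Qed.

End ISPBestResponse.

Lemma demand_is_derive (D0 : R -> R) (alpha beta ps q c lD : R) :
  is_derive D0 c lD -> is_derive (fun t => demand D0 alpha beta ps q t) c lD.
Proof.
  intros HD0. unfold demand. auto_derive; [exact (ex_intro _ lD HD0)|].
  rewrite Rmult_1_l. exact (is_derive_unique _ _ _ HD0).
Qed.

Lemma cp_utility_is_derive (D0 y : R -> R) (alpha beta ps q pt c lD lR : R) :
  is_derive D0 c lD ->
  is_derive (fun D => D * y D) (demand D0 alpha beta ps q c) lR ->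
  is_derive (fun t => U_cp y pt (demand D0 alpha beta ps q t) t) c ((lR - pt) * lD - 1).
Proof.
  intros HD0 HR.
  assert (HDc := demand_is_derive D0 alpha beta ps q c lD HD0).
  assert (HRc := is_derive_comp _ _ c _ _ HR HDc).
  assert (Hg := is_derive_minus _ _ _ _ _
    (is_derive_minus _ _ _ _ _ HRc (is_derive_scal _ c pt _ HDc)) (is_derive_id c)).
  replace ((lR - pt) * lD - 1) with (minus (minus (scal lD lR) (pt * lD)) one)
    by (cbv [minus plus opp scal one]; simpl; cbv [mult]; simpl; ring).
  eapply is_derive_ext; [|exact Hg].
  intros t. unfold U_cp. cbv [minus plus opp]; simpl. ring.
Qed.

Lemma cp_foc (D0 y : R -> R) (alpha beta qmax ps q pt c lD lR : R) :
  (forall c', feasible D0 alpha beta qmax ps q c' ->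
     U_cp y pt (demand D0 alpha beta ps q c') c'
       <= U_cp y pt (demand D0 alpha beta ps q c) c) ->
  feasible D0 alpha beta qmax ps q c -> 0 < c ->
  is_derive D0 c lD ->
  is_derive (fun D => D * y D) (demand D0 alpha beta ps q c) lR ->
  (lR - pt) * lD = 1.
Proof.
  intros Hopt (Hps & Hq & _ & HD) Hc HD0 HR.
  enough ((lR - pt) * lD - 1 = 0) by lra.
  apply (is_derive_local_max _ c _
    (cp_utility_is_derive D0 y alpha beta ps q pt c lD lR HD0 HR)).
  assert (Hpos := locally_gt0 _ Hc).
  assert (Hdem : locally c (fun c' => 0 < demand D0 alpha beta ps q c')).
  { apply (continuous_locally_pos (fun c' => demand D0 alpha beta ps q c')); [|easy].
    apply ex_derive_continuous_R. exists lD. exact (demand_is_derive _ _ _ _ _ _ _ HD0). }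
  apply (filter_imp _ _ (fun c' Hc' => Hopt c' Hc')).
  eapply filter_imp; [|exact (filter_and _ _ Hpos Hdem)].
  intros c' [Hc' HDc']. unfold feasible. repeat split; lra.
Qed.

Lemma isp_interior_demand_le (D0 : R -> R) (alpha beta pr qmax delta : R)
    (ptx psx qx cx pty psy qy cy : R) :
  0 < alpha -> beta ^ 2 < 4 * alpha * pr -> delta <= 1 -> ptx <= pty ->
  D0 cx <= D0 cy ->
  (forall ps' q', feasible D0 alpha beta qmax ps' q' cx ->
     U_isp pr delta ptx ps' q' (demand D0 alpha beta ps' q' cx)
       <= U_isp pr delta ptx psx qx (demand D0 alpha beta psx qx cx)) ->
  (forall ps' q', feasible D0 alpha beta qmax ps' q' cy ->
     U_isp pr delta pty ps' q' (demand D0 alpha beta ps' q' cy)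
       <= U_isp pr delta pty psy qy (demand D0 alpha beta psy qy cy)) ->
  0 < psx -> 0 < qx < qmax -> 0 <= cx -> 0 < demand D0 alpha beta psx qx cx ->
  0 < psy -> 0 < qy < qmax -> 0 <= cy -> 0 < demand D0 alpha beta psy qy cy ->
  demand D0 alpha beta psx qx cx <= demand D0 alpha beta psy qy cy.
Proof.
  intros Halpha Hab Hdelta Hpt HD0 Hispx Hispy Hpsx Hqx Hcx HDx Hpsy Hqy Hcy HDy.
  pose proof (isp_interior_margin _ _ _ _ _ _ _ _ _ _ Hispx Hpsx Hqx Hcx HDx) as Mx.
  pose proof (isp_interior_margin _ _ _ _ _ _ _ _ _ _ Hispy Hpsy Hqy Hcy HDy) as My.
  rewrite (isp_foc_price _ _ _ _ _ _ _ _ _ _ Hispx Hpsx Hqx Hcx HDx),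
    (isp_foc_price _ _ _ _ _ _ _ _ _ _ Hispy Hpsy Hqy Hcy HDy).
  apply Rmult_le_compat_l; [lra|].
  apply (Rmult_le_reg_r (4 * alpha * pr - beta ^ 2)); [lra|].
  rewrite Mx, My. apply Rmult_le_compat_l; [nra|].
  assert (0 <= alpha * (1 - delta) * (pty - ptx)) by (apply Rmult_le_pos; nra).
  lra.
Qed.

Lemma cp_foc_incompatible (lRx lRy lDx lDy ptx pty : R) :
  ptx < pty -> lRy <= lRx -> 0 <= lDy <= lDx ->
  (lRx - ptx) * lDx = 1 -> (lRy - pty) * lDy = 1 -> False.
Proof.
  intros Hpt HlR [HlDy0 HlD] Fx Fy.
  assert (HlDy : 0 < lDy) by (destruct HlDy0 as [|E]; [easy | rewrite <- E in Fy; lra]).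
  assert (Hmarg : 0 < lRy - pty).
  { apply (Rmult_lt_reg_r lDy); [easy | rewrite Fy; lra]. }
  assert ((lRy - pty) * lDy < (lRx - ptx) * lDy) by (apply Rmult_lt_compat_r; lra).
  assert ((lRx - ptx) * lDy <= (lRx - ptx) * lDx) by (apply Rmult_le_compat_l; lra).
  lra.
Qed.

Theorem lemma6
  (alpha beta pr qmax M B vbar delta : R)
  (D0 X x y : R -> R)
  (ptx pty psx qx cx psy qy cy : R)
  (Halpha : 0 < alpha) (Hbeta : 0 < beta) (Hpr : 0 < pr) (Hqmax : 0 < qmax)
  (HM : 0 < M) (HB : 0 < B) (Hvbar : 0 < vbar)
  (Hab : beta ^ 2 < 4 * alpha * pr)
  (Hdelta : 0 <= delta <= 1)
  (HD0diff : differentiable_on_nonneg D0)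
  (HD0conc : concave_on (fun c => 0 <= c) D0)
  (HD0inc : strictly_increasing_on_nonneg D0)
  (HX : cdf_with_density vbar X x)
  (Hy : is_attention_price M B vbar X y)
  (HyDconc : concave_on (fun D => 0 < D) (fun D => D * y D))
  (HyDdiff : forall D, 0 < D -> ex_derive (fun D => D * y D) D)
  (Hpt : 0 <= ptx < pty)
  (Hbx : best_strategy D0 y alpha beta pr qmax delta ptx psx qx cx)
  (Hby : best_strategy D0 y alpha beta pr qmax delta pty psy qy cy)
  (Hintx : 0 < psx /\ 0 < qx < qmax /\ 0 < cx)
  (Hinty : 0 < psy /\ 0 < qy < qmax /\ 0 < cy) :
  cy < cx.
Proof.
  destruct Hbx as [Hfx [Hispx Hcpx]], Hby as [Hfy [Hispy Hcpy]].
  destruct Hintx as [Hpsx [Hqx Hcx]], Hinty as [Hpsy [Hqy Hcy]].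
  pose proof Hfx as (_ & _ & _ & HDx). pose proof Hfy as (_ & _ & _ & HDy).
  destruct HD0diff as [HD0d _].
  destruct (HD0d cx Hcx) as [lDx HlDx], (HD0d cy Hcy) as [lDy HlDy].
  destruct (HyDdiff _ HDx) as [lRx HlRx], (HyDdiff _ HDy) as [lRy HlRy].
  destruct (Rlt_or_le cy cx) as [|Hle]; [assumption|exfalso].
  assert (HD0le : D0 cx <= D0 cy).
  { destruct (Req_dec cx cy) as [<-|]; [lra|]. left. apply HD0inc; lra. }
  assert (HDle : demand D0 alpha beta psx qx cx <= demand D0 alpha beta psy qy cy).
  { apply (isp_interior_demand_le D0 alpha beta pr qmax delta ptx psx qx cx pty psy qy cy);
      auto; lra. }
  apply (cp_foc_incompatible lRx lRy lDx lDy ptx pty); try lra.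
  - exact (concave_on_is_derive_antitone _ _ _ _ _ _ HyDconc HDx HDy HDle HlRx HlRy).
  - split.
    + apply (strictly_increasing_on_nonneg_is_derive_ge0 D0 cy); auto; lra.
    + apply (concave_on_is_derive_antitone (fun c => 0 <= c) D0 cx cy); auto; simpl; lra.
  - exact (cp_foc _ _ _ _ _ _ _ _ _ _ _ Hcpx Hfx Hcx HlDx HlRx).
  - exact (cp_foc _ _ _ _ _ _ _ _ _ _ _ Hcpy Hfy Hcy HlDy HlRy).
Qed.
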